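(* Let $\mathcal G_1,\mathcal G_2$ be classes of graphs and $m,n$ positive integers. If no graph in $\mathcal G_1$ has a $K_{2,m}$-minor and no graph in $\mathcal G_2$ has a $K_{2,n}$-minor, then no graph in $\mathcal G_1\oplus\mathcal G_2$ has a $K_{2,mn}$-minor.
   Context: Graphs are finite and simple; minors are simple minors. 2-sum: for $i=1,2$ let $G_i$ be disjoint graphs and $z_i\in V(G_i)$ incident with exactly two edges $x_iz_i,y_iz_i$; let $G_i'=G_i\setminus z_i$ if $x_iy_i\notin E(G_i)$ and $G_i'=G_i\setminus z_i\setminus x_iy_i$ otherwise. A 2-sum over $z_1,z_2$ is obtained from $G_1',G_2'$ by identifying $x_1$ with $x_2$ and $y_1$ with $y_2$ and then, if $x_iy_i\in E(G_i)$ for at least one $i$, adding an edge between the two identified vertices. This extends to summing one graph $G'$ with several graphs $G_1,\dots,G_t$ (each having a degree-two vertex $z_i$) over $t$ pairwise nonadjacent degree-two vertices $z_1',\dots,z_t'$ of $G'$, summing $G_i$ over $z_i$ with $G'$ over $z_i'$. $\mathcal G_1\oplus\mathcal G_2$ is the class of all graphs obtained by 2-summing one graph of $\mathcal G_1$ with several (any number, possibly none) graphs of $\mathcal G_2$. *)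

From mathcomp Require Import all_boot.
Set Implicit Arguments. Unset Strict Implicit. Unset Printing Implicit Defensive.

Record graph := Graph {
  gV :> finType;
  gadj : rel gV;
  gadj_sym : symmetric gadj;
  gadj_irr : irreflexive gadj }.

Definition gclass := graph -> Prop.

Definition hasMinor (G H : graph) : Prop :=
  exists B : H -> {set G},
    [/\ forall h, B h != set0,
        forall h1 h2, h1 != h2 -> [disjoint B h1 & B h2],
        forall h, {in B h &, forall u v,
          connect (fun a b => [&& gadj a b, a \in B h & b \in B h]) u v}
      & forall h1 h2, gadj h1 h2 ->
          exists u v, [/\ u \in B h1, v \in B h2 & gadj u v]].

Definition K2adj (m : nat) : rel ('I_2 + 'I_m)%type :=
  fun a b => match a, b with
             | inl _, inr _ | inr _, inl _ => true
             | _, _ => false end.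

Lemma K2adj_sym m : symmetric (@K2adj m).
Proof. by case=> a; case. Qed.

Lemma K2adj_irr m : irreflexive (@K2adj m).
Proof. by case. Qed.

Definition K2 (m : nat) : graph := Graph (@K2adj_sym m) (@K2adj_irr m).

Definition deg2 (G : graph) (z x y : G) : Prop :=
  x != y /\ forall v, gadj z v <-> (v = x \/ v = y).

Section TwoSum.
(** Data for summing one graph [G'] with graphs [Gs i] (i < t):
    [Gs i] is summed over its degree-two vertex [z i] (neighbours [x i], [y i])
    with [G'] over its degree-two vertex [z' i] (neighbours [x' i], [y' i]);
    [x i] is identified with [x' i] and [y i] with [y' i]. *)
Variables (G' : graph) (t : nat) (Gs : 'I_t -> graph).
Variables (z' x' y' : 'I_t -> G').
Variables (z x y : forall i, Gs i).

Definition sumV : finType :=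
  ({v : G' | v \notin [set z' i | i in 'I_t]} +
   {i : 'I_t & {v : Gs i | [&& v != z i, v != x i & v != y i]}})%type.

Definition img0 (v : G') : option sumV :=
  match insub v with Some s => Some (inl s) | None => None end.

Definition imgi (i : 'I_t) (v : Gs i) : option sumV :=
  if v == x i then img0 (x' i)
  else if v == y i then img0 (y' i)
  else match insub v with
       | Some s => Some (inr (Tagged (fun j => {v : Gs j | [&& v != z j, v != x j & v != y j]}) s))
       | None => None end.

(** This equals the 2-sum as defined
    (deleting x_i y_i and re-adding the edge between identified vertices
    if it was present in at least one summand). *)
Definition sumadj (w1 w2 : sumV) : Prop :=
  (exists a b : G', [/\ gadj a b, img0 a = Some w1 & img0 b = Some w2]) \/
  (exists i (a b : Gs i), [/\ gadj a b, imgi a = Some w1 & imgi b = Some w2]).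

Definition sum_ok : Prop :=
  [/\ forall i, deg2 (z i) (x i) (y i),
      forall i, deg2 (z' i) (x' i) (y' i)
    & forall i j, i != j -> z' i != z' j /\ ~~ gadj (z' i) (z' j)].

End TwoSum.

(** [G] belongs to [C1 (+) C2]: [G] is (isomorphic to) a 2-sum of one graph of
    [C1] with several (possibly zero) graphs of [C2]. *)
Definition twoSumClass (C1 C2 : gclass) (G : graph) : Prop :=
  exists (G' : graph) (t : nat) (Gs : 'I_t -> graph)
         (z' x' y' : 'I_t -> G') (z x y : forall i, Gs i)
         (f : G -> sumV z' z x y),
    [/\ C1 G', forall i, C2 (Gs i),
        sum_ok z' x' y' z x y,
        bijective f
      & forall u v, gadj u v <-> sumadj x' y' (f u) (f v)].

(* A piece
   meets the rest of [G] only in its two attachment vertices, so a connected branch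
   set either lies inside one piece or contains an attachment vertex of every piece it
   enters.  If a hub lies inside a piece, contracting everything outside that piece
   onto its degree-two vertex [z i] yields a K_{2,n}-model of [Gs i]: at most one spoke
   contains both attachment vertices, and mn - 1 >= n as soon as m >= 2 (for m = 1 the
   base contains K_{2,1} around any [z' i]).  If some piece contains n spokes, the same
   contraction works, both hubs now passing through its attachment vertices.
   Otherwise each piece contains fewer than n spokes; contracting every piece onto its
   vertex [z' i] keeps the spokes lying in no piece and turns each piece containing a
   spoke into the one-vertex spoke [z' i], which leaves at least m spokes of a
   K_{2,m}-model of [G']. *)

From mathcomp Require Import all_boot zify.
Set Implicit Arguments. Unset Strict Implicit. Unset Printing Implicit Defensive.

Section InducedConnectivity.
Variable G : graph.
Implicit Types A B : {set G}.

Definition induced A : rel G := fun a b => [&& gadj a b, a \in A & b \in A].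
Definition connected A := {in A &, forall u v, connect (induced A) u v}.
Definition linked A B := exists u v, [/\ u \in A, v \in B & gadj u v].

Lemma induced_sym A : symmetric (induced A).
Proof. by move=> a b; rewrite /induced gadj_sym andbCA andbA andbC andbA andbC. Qed.

Lemma connect_inducedC A u v :
  connect (induced A) u v = connect (induced A) v u.
Proof. exact: (sym_connect_sym (@induced_sym A)). Qed.

Lemma linkedC A B : linked A B -> linked B A.
Proof. by case=> u [v [*]]; exists v, u; split=> //; rewrite gadj_sym. Qed.

Lemma connected_set1 (u : G) : connected [set u].
Proof. by move=> a b; rewrite !inE => /eqP-> /eqP->; apply: connect0. Qed.

Lemma connect_induced_edge A a b :
  gadj a b -> a \in A -> b \in A -> connect (induced A) a b.
Proof. by move=> ab aA bA; apply: connect1; rewrite /induced ab aA bA. Qed.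

Lemma connect_induced_edgeC A a b :
  gadj b a -> a \in A -> b \in A -> connect (induced A) a b.
Proof. by rewrite gadj_sym; apply: connect_induced_edge. Qed.

Lemma connect_induced_closed A (P : pred G) u v :
  (forall a b, a \in A -> b \in A -> gadj a b -> P a -> P b) ->
  connect (induced A) u v -> P u -> P v.
Proof.
move=> closedP /connectP[p pth ->]; elim: p u pth => [|b p IH] u //=.
by case/andP=> /and3P[ub uA bA] pth Pu; apply: IH pth (closedP _ _ uA bA ub Pu).
Qed.

End InducedConnectivity.

Lemma connect_induced_map (G H : graph) (A : {set G}) (B : {set H}) (g : G -> H) u v :
  {in A &, forall a b, gadj a b -> connect (induced B) (g a) (g b)} ->
  connect (induced A) u v -> connect (induced B) (g u) (g v).
Proof.
move=> gE /connectP[p pth ->]; elim: p u pth => [|a p IH] u /=.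
  by move=> _; apply: connect0.
case/andP=> /and3P[ua uA aA] pth.
exact: connect_trans (gE _ _ uA aA ua) (IH _ pth).
Qed.

Lemma connected_map (G H : graph) (A : {set G}) (B : {set H}) (g : G -> H) :
  connected A ->
  {in A &, forall a b, gadj a b -> connect (induced B) (g a) (g b)} ->
  (forall w, w \in B -> exists2 u, u \in A & connect (induced B) (g u) w) ->
  connected B.
Proof.
move=> cA gE gB w1 w2 /gB[u1 u1A c1] /gB[u2 u2A c2].
rewrite connect_inducedC in c1.
apply: connect_trans c1 _; apply: connect_trans c2.
exact: connect_induced_map gE (cA _ _ u1A u2A).
Qed.

(* Branch sets [H1], [H2] of the two hubs and [S j], [j] in [P], of the spokes. *)
Definition K2model (G : graph) (H1 H2 : {set G}) (I : finType) (P : pred I)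
  (S : I -> {set G}) :=
  [/\ [/\ H1 != set0, H2 != set0, [disjoint H1 & H2], connected H1 & connected H2],
      forall j, P j -> [/\ S j != set0, connected (S j),
        [disjoint S j & H1] /\ [disjoint S j & H2], linked H1 (S j) & linked H2 (S j)]
    & forall j j', P j -> P j' -> j != j' -> [disjoint S j & S j']].

Lemma K2modelC (G : graph) H1 H2 (I : finType) (P : pred I) (S : I -> {set G}) :
  K2model H1 H2 P S -> K2model H2 H1 P S.
Proof.
case=> [[n1 n2 d c1 c2] hS hD]; split=> //; first by split=> //; rewrite disjoint_sym.
by move=> j /hS[? ? [? ?] ? ?]; split.
Qed.

Lemma K2model_minor (G : graph) H1 H2 (I : finType) (P : pred I) (S : I -> {set G}) n :
  K2model H1 H2 P S -> n <= #|P| -> hasMinor G (K2 n).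
Proof.
case=> [[n1 n2 d c1 c2] hS hD] nP.
pose e (j : 'I_n) : I := enum_val (widen_ord nP j).
have eP j : P (e j) by have := enum_valP (widen_ord nP j).
have e_inj : injective e.
  by move=> a b /enum_val_inj /(congr1 val) /= /val_inj.
pose B (h : K2 n) : {set G} :=
  match h with inl a => if a == ord0 then H1 else H2 | inr j => S (e j) end.
have hub (a : 'I_2) : [/\ B (inl a) != set0, connected (B (inl a)) &
     forall j, linked (B (inl a)) (S (e j)) /\ [disjoint S (e j) & B (inl a)]].
  by rewrite /B; case: ifP=> _; split=> // j; have [? ? [? ?] ? ?] := hS _ (eP j).
exists B; split.
- by case=> [a|j]; [case: (hub a)|case: (hS _ (eP j))].
- case=> [a|j] [b|j'] neq /=.
  + have ab : (a == ord0) != (b == ord0).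
      apply: contra neq => /eqP; case: a b => [[|[|a]] ?] [[|[|b]] ?] //= _;
        by apply/eqP/val_inj.
    by case: (a == ord0) (b == ord0) ab => [] [] //= _; rewrite // disjoint_sym.
  + by case: (hub a) => _ _ /(_ j') [_]; rewrite disjoint_sym.
  + by case: (hub b) => _ _ /(_ j) [_].
  + by apply: hD => //; apply: contra neq => /eqP /e_inj ->.
- by case=> [a|j]; [case: (hub a)|case: (hS _ (eP j))].
- case=> [a|j] [b|j'] //= _.
  + by case: (hub a) => _ _ /(_ j') [].
  + by case: (hub b) => _ _ /(_ j) [] /linkedC.
Qed.

Lemma minor_K2model (G : graph) k :
  hasMinor G (K2 k) -> exists H1 H2 (S : 'I_k -> {set G}), K2model H1 H2 predT S.
Proof.
case=> B [ne dj cn ed].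
exists (B (inl ord0)), (B (inl (Ordinal (isT : 1 < 2)))), (fun j => B (inr j)).
split; first by split; [apply: ne|apply: ne|apply: dj|apply: cn|apply: cn].
  move=> j _; split; [apply: ne|apply: cn|by split; apply: dj|by apply: ed|by apply: ed].
by move=> j j' _ _ nj; apply: dj; apply: contra nj => /eqP [->].
Qed.

Lemma card_sum_indicator (T : finType) (P : pred T) : #|P| = \sum_(j : T) (P j : nat).
Proof.
rewrite -sum1_card big_mkcond /=; apply: eq_bigr => j _; rewrite unfold_in.
by case: (P j).
Qed.

Lemma card_sum_pred (T1 T2 : finType) (P1 : pred T1) (P2 : pred T2) :
  #|(fun w : T1 + T2 => match w with inl j => P1 j | inr i => P2 i end)|
  = #|P1| + #|P2|.
Proof. by rewrite !card_sum_indicator big_sumType. Qed.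

Lemma K2_1_minor (G : graph) (a b c : G) : gadj c a -> gadj c b -> a != b ->
  hasMinor G (K2 1).
Proof.
move=> ca cb ab.
have nca : c != a by apply: contraTneq ca => ->; rewrite gadj_irr.
have ncb : c != b by apply: contraTneq cb => ->; rewrite gadj_irr.
apply: (@K2model_minor _ [set a] [set b] _ (predT : pred 'I_1) (fun _ => [set c])).
  split.
  - split; [by apply/set0Pn; exists a; rewrite set11|by apply/set0Pn; exists b; rewrite set11
           |by rewrite disjoints1 inE|exact: connected_set1|exact: connected_set1].
  - move=> j _; split; [|exact: connected_set1| | |].
    + by apply/set0Pn; exists c; rewrite set11.
    + by rewrite !disjoints1 !inE.
    + by exists a, c; rewrite !set11 gadj_sym.
    + by exists b, c; rewrite !set11 gadj_sym.
  - by move=> j j' _ _; rewrite (ord1 j) (ord1 j').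
by rewrite card_sum_indicator big_ord1.
Qed.

Lemma leq_outer_classes k t m n (outer : pred 'I_k) (cls : 'I_t -> pred 'I_k)
    (used : pred 'I_t) :
  (forall j, ~~ outer j -> exists i, cls i j) ->
  (forall j i, outer j -> ~~ cls i j) ->
  (forall j i i', cls i j -> cls i' j -> i = i') ->
  (forall i, used i = [exists j, cls i j]) ->
  (forall i, #|cls i| < n) -> k = m * n -> 0 < n ->
  m <= #|outer| + #|used|.
Proof.
move=> cover outerN cls_uniq usedE small km n_gt0.
have one j : outer j + \sum_(i < t) (cls i j : nat) = 1.
  have [oj|oj] := boolP (outer j).
    by rewrite big1 // => i _; rewrite (negbTE (outerN _ _ oj)).
  have [i0 i0j] := cover _ oj.
  rewrite (bigD1 i0) //= i0j big1 // => i ni; apply/eqP; rewrite eqb0.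
  by apply: contra ni => /cls_uniq -/(_ _ i0j) ->.
have k_split : k = #|outer| + \sum_(i < t) #|cls i|.
  rewrite card_sum_indicator.
  rewrite (eq_bigr (fun i => \sum_j (cls i j : nat))) => [|i _]; last first.
    exact: card_sum_indicator.
  rewrite exchange_big /= -big_split /= -{1}(card_ord k) -sum1_card.
  by apply: eq_bigr => j _; rewrite one.
have classes_small : \sum_(i < t) #|cls i| <= #|used| * n.-1.
  rewrite card_sum_indicator big_distrl /=; apply: leq_sum => i _.
  rewrite usedE; have [/existsP _|none] := boolP [exists j, cls i j].
    by rewrite mul1n -ltnS (leq_trans (small i)) // leqSpred.
  rewrite mul0n leqn0 -/(#|cls i| == 0) -/(pred0b _); apply/pred0P => j /=.
  by apply/negP => ij; move/existsP: none; apply; exists j.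
move: k_split classes_small; set o := #|outer|; set p := #|used|.
set s := \sum_(i < t) _ => k_split classes_small.
have : m * n <= (o + p) * n by nia.
by rewrite leq_pmul2r.
Qed.

(* An abstract decomposition of [G] along the base [G'] and the pieces [Gs i]:
   [inner i] is the set of vertices coming from [Gs i] minus [z i], [x i], [y i],
   and [X i], [Y i] are the vertices where [x i = x' i] and [y i = y' i] were glued.
   [to_base] contracts the inner vertices of piece [i] to [z' i]; [to_piece i]
   contracts everything outside [piece i] to [z i]. *)
Section Decomposition.
Variables (G G' : graph) (t : nat) (Gs : 'I_t -> graph).
Variables (z' x' y' : 'I_t -> G') (z x y : forall i, Gs i).
Variables (inner : 'I_t -> G -> bool) (X Y : 'I_t -> G) (to_base : G -> G')
  (to_piece : forall i, G -> Gs i).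

Implicit Types (S : {set G}) (own : bool) (u v : G) (i : 'I_t).

Definition interior i := [set u | inner i u].
Definition piece i := [set u | [|| inner i u, u == X i | u == Y i]].
Definition outside := [set u | [forall i, ~~ inner i u]].

Hypothesis X_not_inner : forall i j, ~~ inner j (X i).
Hypothesis Y_not_inner : forall i j, ~~ inner j (Y i).
Hypothesis inner_uniq : forall i j u, inner i u -> inner j u -> i = j.
Hypothesis inner_edge : forall i u v, gadj u v -> inner i u ->
  [|| inner i v, v == X i | v == Y i].
Hypothesis to_base_edge : forall u v, gadj u v ->
  [\/ gadj (to_base u) (to_base v), to_base u = to_base v |
      exists i, (u = X i /\ v = Y i) \/ (u = Y i /\ v = X i)].
Hypothesis to_piece_edge : forall i u v, gadj u v ->
  [\/ gadj (to_piece i u) (to_piece i v), to_piece i u = to_piece i v |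
      (u = X i /\ v = Y i) \/ (u = Y i /\ v = X i)].
Hypothesis to_base_z : forall i u, (to_base u == z' i) = inner i u.
Hypothesis to_base_inj : {in outside &, injective to_base}.
Hypothesis to_base_X : forall i, to_base (X i) = x' i.
Hypothesis to_base_Y : forall i, to_base (Y i) = y' i.
Hypothesis to_piece_X : forall i, to_piece i (X i) = x i.
Hypothesis to_piece_Y : forall i, to_piece i (Y i) = y i.
Hypothesis to_piece_z : forall i u, (to_piece i u == z i) = (u \notin piece i).
Hypothesis to_piece_inj : forall i, {in piece i &, injective (to_piece i)}.
Hypothesis adj_z'x' : forall i, gadj (z' i) (x' i).
Hypothesis adj_z'y' : forall i, gadj (z' i) (y' i).
Hypothesis adj_zx : forall i, gadj (z i) (x i).
Hypothesis adj_zy : forall i, gadj (z i) (y i).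
Hypothesis z'_inj : injective z'.
Hypothesis x_neq_y : forall i, x i != y i.

Lemma X_piece i : X i \in piece i. Proof. by rewrite inE eqxx orbT. Qed.
Lemma Y_piece i : Y i \in piece i. Proof. by rewrite inE eqxx !orbT. Qed.

Lemma inner_piece i u : inner i u -> u \in piece i.
Proof. by move=> iu; rewrite inE iu. Qed.

Lemma edge_inner_piece i u v : gadj u v -> inner i v -> u \in piece i.
Proof. by move=> uv iv; rewrite inE; apply: inner_edge iv; rewrite gadj_sym. Qed.

Lemma X_outside i : X i \in outside.
Proof. by rewrite inE; apply/forallP=> j; apply: X_not_inner. Qed.

Lemma Y_outside i : Y i \in outside.
Proof. by rewrite inE; apply/forallP=> j; apply: Y_not_inner. Qed.

Lemma not_outside u : u \notin outside -> exists i, inner i u.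
Proof. by rewrite inE negb_forall => /existsP[i]; rewrite negbK; exists i. Qed.

Lemma outsideF u i : u \in outside -> inner i u = false.
Proof. by rewrite inE => /forallP/(_ i)/negbTE. Qed.

Lemma inner_not_XY_l i u v : inner i u ->
  ((u == X i) && (v == Y i)) || ((u == Y i) && (v == X i)) = false.
Proof.
move=> iu; apply/negbTE; apply/norP; split; apply/nandP; left; apply/eqP=> e;
  subst u; by rewrite ?(negbTE (X_not_inner _ _)) ?(negbTE (Y_not_inner _ _)) in iu.
Qed.

Lemma inner_not_XY_r i u v : inner i v ->
  ((u == X i) && (v == Y i)) || ((u == Y i) && (v == X i)) = false.
Proof.
move=> iv; apply/negbTE; apply/norP; split; apply/nandP; right; apply/eqP=> e;
  subst v; by rewrite ?(negbTE (X_not_inner _ _)) ?(negbTE (Y_not_inner _ _)) in iv.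
Qed.

Lemma X_notin_interior S i : S \subset interior i -> X i \in S = false.
Proof.
by move=> Sin; apply/negbTE/negP => /(subsetP Sin); rewrite inE (negbTE (X_not_inner _ _)).
Qed.

Lemma connected_sub_interior S i u : connected S -> u \in S -> inner i u ->
  X i \notin S -> Y i \notin S -> S \subset interior i.
Proof.
move=> cS uS iu nX nY; apply/subsetP=> v vS; rewrite inE.
apply: (connect_induced_closed (P := inner i)) (cS _ _ uS vS) iu.
move=> a b aS bS ab ia; case/or3P: (inner_edge ab ia) => // /eqP e; subst b.
- by rewrite bS in nX.
- by rewrite bS in nY.
Qed.

Lemma connected_meets_XY S i u : connected S -> u \in S -> u \in piece i ->
  ~~ (S \subset interior i) -> (X i \in S) || (Y i \in S).
Proof.
move=> cS uS; rewrite inE => /or3P[iu|/eqP eu|/eqP eu];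
  [|by rewrite -eu uS|by rewrite -eu uS orbT].
by apply: contraR => /norP[nX nY]; apply: connected_sub_interior cS uS iu nX nY.
Qed.

Lemma connected_meets_outside S : S != set0 -> connected S ->
  (forall i, ~~ (S \subset interior i)) -> exists2 u, u \in S & u \in outside.
Proof.
case/set0Pn=> u uS cS nin; have [|/not_outside[i iu]] := boolP (u \in outside).
  by exists u.
case/orP: (connected_meets_XY cS uS (inner_piece iu) (nin i)) => [XS|YS].
- by exists (X i) => //; apply: X_outside.
- by exists (Y i) => //; apply: Y_outside.
Qed.

Lemma XY_split i S S' : (X i \in S) || (Y i \in S) -> (X i \in S') || (Y i \in S') ->
  [disjoint S & S'] -> ((X i \in S) && (Y i \in S')) || ((Y i \in S) && (X i \in S')).
Proof.
move=> /orP[h|h] /orP[h'|h'] dj; rewrite ?h ?h' ?orbT //.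
- by rewrite (disjointFr dj h) in h'.
- by rewrite (disjointFr dj h) in h'.
Qed.

Section PieceProjection.
Variable i : 'I_t.

Definition proj_piece S own : {set Gs i} :=
  to_piece i @: (S :&: piece i) :|: (if own then [set z i] else set0).

Lemma proj_piece_mem S own u :
  u \in S -> u \in piece i -> to_piece i u \in proj_piece S own.
Proof. by move=> uS uC; rewrite inE; apply/orP; left; apply: imset_f; rewrite inE uS. Qed.

Lemma proj_piece_z S : z i \in proj_piece S true.
Proof. by rewrite !inE eqxx orbT. Qed.

Lemma proj_piece_x S own : X i \in S -> x i \in proj_piece S own.
Proof. by move=> XS; rewrite -to_piece_X proj_piece_mem // X_piece. Qed.

Lemma proj_piece_y S own : Y i \in S -> y i \in proj_piece S own.
Proof. by move=> YS; rewrite -to_piece_Y proj_piece_mem // Y_piece. Qed.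

Lemma proj_pieceP S own w : w \in proj_piece S own ->
  (exists2 u, u \in S & (u \in piece i) && (w == to_piece i u)) \/ (own /\ w = z i).
Proof.
rewrite inE => /orP[/imsetP[u] |].
  by rewrite inE => /andP[uS uC] ->; left; exists u; rewrite ?uC ?eqxx.
by case: own; rewrite ?inE // => /eqP->; right.
Qed.

Lemma proj_piece_memT S own u :
  u \in S -> (u \in piece i) || own -> to_piece i u \in proj_piece S own.
Proof.
move=> uS /orP[uC|ow]; first exact: proj_piece_mem.
have [uC|uC] := boolP (u \in piece i); first exact: proj_piece_mem.
by rewrite ow (eqP (_ : to_piece i u == z i)) ?proj_piece_z // to_piece_z.
Qed.

Lemma proj_piece_neq0 S own u :
  u \in S -> (u \in piece i) || own -> proj_piece S own != set0.
Proof. by move=> uS uo; apply/set0Pn; exists (to_piece i u); apply: proj_piece_memT. Qed.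

Lemma to_piece_XY u : u \in piece i -> ~~ inner i u ->
  (to_piece i u = x i) \/ (to_piece i u = y i).
Proof. by rewrite inE => /or3P[->//|/eqP->|/eqP->] _; [left|right]. Qed.

Lemma proj_piece_connect_xy S :
  X i \in S -> Y i \in S -> connect (induced (proj_piece S true)) (x i) (y i).
Proof.
move=> XS YS; apply: (connect_trans (_ : connect _ _ (z i))).
  by apply: (connect_induced_edgeC (adj_zx i)); rewrite ?proj_piece_x ?proj_piece_z.
by apply: (connect_induced_edge (adj_zy i)); rewrite ?proj_piece_y ?proj_piece_z.
Qed.

(* Turns the edges of [S] into paths of [proj_piece S own], witnessing its connectivity. *)
Definition piece_retract S own u : Gs i :=
  if u \in piece i then to_piece i u else if own then z i
  else if X i \in S then x i else y i.

Lemma piece_retract_exit S own u v :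
  own || ~~ ((X i \in S) && (Y i \in S)) ->
  u \in S -> v \in S -> gadj u v -> v \notin piece i ->
  connect (induced (proj_piece S own)) (piece_retract S own u) (piece_retract S own v).
Proof.
move=> hown uS vS uv vC; rewrite /piece_retract (negbTE vC).
case: ifP => uC; last exact: connect0.
have niu : ~~ inner i u.
  by apply: contra vC => iu; have := inner_edge uv iu; rewrite inE.
have uT := proj_piece_mem own uS uC.
have uXY : (u == X i) || (u == Y i) by move: uC; rewrite inE (negbTE niu).
case: (to_piece_XY uC niu) => e; rewrite e in uT *.
- case: ifP => [ow|now].
    by apply: (connect_induced_edgeC (adj_zx i)); [rewrite -ow|apply: proj_piece_z].
  case: ifP => XS; first exact: connect0.
  case/orP: uXY => /eqP eu; first by rewrite -eu uS in XS.
  by rewrite eu to_piece_Y in e; move: (x_neq_y i); rewrite e eqxx.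
- case: ifP => [ow|now].
    by apply: (connect_induced_edgeC (adj_zy i)); [rewrite -ow|apply: proj_piece_z].
  case: ifP => XS; last exact: connect0.
  case/orP: uXY => /eqP eu; last by move: hown; rewrite now XS -eu uS.
  by rewrite eu to_piece_X in e; move: (x_neq_y i); rewrite e eqxx.
Qed.

Lemma piece_retract_edge S own u v :
  own || ~~ ((X i \in S) && (Y i \in S)) ->
  u \in S -> v \in S -> gadj u v ->
  connect (induced (proj_piece S own)) (piece_retract S own u) (piece_retract S own v).
Proof.
move=> hown uS vS uv.
have [vC|vC] := boolP (v \in piece i); last exact: piece_retract_exit.
have [uC|uC] := boolP (u \in piece i); last first.
  by rewrite connect_inducedC; apply: piece_retract_exit => //; rewrite gadj_sym.
have own_XY : X i \in S -> Y i \in S -> own by move=> XS YS; move: hown; rewrite XS YS orbF.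
rewrite /piece_retract uC vC.
case: (to_piece_edge i uv) => [a|->|[[eu ev]|[eu ev]]]; subst.
- by apply: connect_induced_edge => //; apply: proj_piece_mem.
- exact: connect0.
- by rewrite to_piece_X to_piece_Y (own_XY uS vS) proj_piece_connect_xy.
- by rewrite to_piece_X to_piece_Y (own_XY vS uS) connect_inducedC proj_piece_connect_xy.
Qed.

Lemma proj_piece_connected S own : S != set0 -> connected S ->
  own || ~~ ((X i \in S) && (Y i \in S)) ->
  (own -> [|| X i \in S, Y i \in S | [disjoint S & piece i]]) ->
  connected (proj_piece S own).
Proof.
move=> neS cS hown hown2.
apply: (@connected_map _ _ S _ (piece_retract S own)) cS _ _.
  by move=> u v uS vS; apply: piece_retract_edge.
move=> w /proj_pieceP[[u uS /andP[uC /eqP->]]|[ow ->]].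
  by exists u => //; rewrite /piece_retract uC connect0.
case/or3P: (hown2 ow) => [XS|YS|dj].
- exists (X i) => //; rewrite /piece_retract X_piece to_piece_X.
  by apply: (connect_induced_edgeC (adj_zx i)); rewrite ?proj_piece_x // ow proj_piece_z.
- exists (Y i) => //; rewrite /piece_retract Y_piece to_piece_Y.
  by apply: (connect_induced_edgeC (adj_zy i)); rewrite ?proj_piece_y // ow proj_piece_z.
- case/set0Pn: neS => u uS; exists u => //.
  by rewrite /piece_retract (disjointFr dj uS) ow connect0.
Qed.

Lemma proj_piece_disjoint S S' own own' : [disjoint S & S'] -> ~~ (own && own') ->
  [disjoint proj_piece S own & proj_piece S' own'].
Proof.
move=> dj no; rewrite -setI_eq0; apply/set0Pn => -[w]; rewrite inE.
case/andP=> /proj_pieceP[[u uS /andP[uC /eqP->]]|[ow ->]]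
            /proj_pieceP[[v vS /andP[vC /eqP e]]|[ow' e]].
- by have eu := to_piece_inj uC vC e; subst v; rewrite (disjointFr dj uS) in vS.
- by move: (to_piece_z i u); rewrite e eqxx uC.
- by move: (to_piece_z i v); rewrite -e eqxx vC.
- by rewrite ow ow' in no.
Qed.

Lemma proj_piece_linked S S' own own' u v : [disjoint S & S'] -> ~~ (own && own') ->
  u \in S -> v \in S' -> gadj u v -> (u \in piece i) || own -> (v \in piece i) || own' ->
  (((u == X i) && (v == Y i)) || ((u == Y i) && (v == X i)) -> own || own') ->
  linked (proj_piece S own) (proj_piece S' own').
Proof.
move=> dj no uS vS uv uo vo hp.
have uT := proj_piece_memT uS uo; have vT := proj_piece_memT vS vo.
case: (to_piece_edge i uv) => [a|e|[[eu ev]|[eu ev]]].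
- by exists (to_piece i u), (to_piece i v).
- by rewrite e in uT; rewrite (disjointFr (proj_piece_disjoint dj no) uT) in vT.
- subst u v; rewrite to_piece_X in uT; rewrite to_piece_Y in vT.
  have /orP[ow|ow'] : own || own' by apply: hp; rewrite !eqxx.
    by exists (z i), (y i); rewrite adj_zy ow proj_piece_z.
  by exists (x i), (z i); rewrite gadj_sym adj_zx ow' proj_piece_z.
- subst u v; rewrite to_piece_Y in uT; rewrite to_piece_X in vT.
  have /orP[ow|ow'] : own || own' by apply: hp; rewrite !eqxx orbT.
    by exists (z i), (x i); rewrite adj_zx ow proj_piece_z.
  by exists (y i), (z i); rewrite gadj_sym adj_zy ow' proj_piece_z.
Qed.

Lemma proj_piece_linked_z S S' own' : (X i \in S') || (Y i \in S') ->
  linked (proj_piece S true) (proj_piece S' own').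
Proof.
case/orP=> h.
  by exists (z i), (x i); rewrite adj_zx proj_piece_z proj_piece_x.
by exists (z i), (y i); rewrite adj_zy proj_piece_z proj_piece_y.
Qed.

End PieceProjection.

Lemma proj_piece_linked_interior i S S' own own' :
  [disjoint S & S'] -> ~~ (own && own') -> linked S S' ->
  (S \subset interior i) || (S' \subset interior i) ->
  linked (proj_piece i S own) (proj_piece i S' own').
Proof.
move=> dj no [u [v [uS vS uv]]] Sin.
have [iu|iv] : inner i u \/ inner i v.
  by case/orP: Sin => /subsetP sub; [left; have := sub u uS|right; have := sub v vS];
     rewrite inE.
- have vC : v \in piece i by rewrite (edge_inner_piece (_ : gadj v u) iu) // gadj_sym.
  by apply: (proj_piece_linked dj no uS vS uv); rewrite ?(inner_piece iu) ?vC ?(inner_not_XY_l _ iu).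
- have uC : u \in piece i by rewrite (edge_inner_piece uv iv).
  by apply: (proj_piece_linked dj no uS vS uv); rewrite ?(inner_piece iv) ?uC ?(inner_not_XY_r _ iv).
Qed.

Definition piece_of u := [pick i | inner i u].

Lemma piece_of_inner i u : inner i u -> piece_of u = Some i.
Proof.
move=> iu; rewrite /piece_of; case: pickP => [j ju|/(_ i)]; last by rewrite iu.
by rewrite (inner_uniq ju iu).
Qed.

Lemma piece_of_outside u : u \in outside -> piece_of u = None.
Proof. by move=> uO; rewrite /piece_of; case: pickP => // j; rewrite outsideF. Qed.

Section BaseProjection.
Variable J : pred 'I_t.

Definition proj_base S : {set G'} :=
  to_base @: (S :&: outside) :|: z' @: [set i | J i && (X i \in S)].

Lemma proj_base_mem S u : u \in S -> u \in outside -> to_base u \in proj_base S.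
Proof. by move=> uS uO; rewrite inE; apply/orP; left; apply: imset_f; rewrite inE uS. Qed.

Lemma proj_base_x S i : X i \in S -> x' i \in proj_base S.
Proof. by move=> XS; rewrite -to_base_X proj_base_mem // X_outside. Qed.

Lemma proj_base_y S i : Y i \in S -> y' i \in proj_base S.
Proof. by move=> YS; rewrite -to_base_Y proj_base_mem // Y_outside. Qed.

Lemma proj_base_z S i : J i -> X i \in S -> z' i \in proj_base S.
Proof. by move=> Ji XS; rewrite inE; apply/orP; right; apply: imset_f; rewrite inE Ji. Qed.

Lemma proj_baseP S w : w \in proj_base S ->
  (exists2 u, u \in S & (u \in outside) && (w == to_base u)) \/
  (exists2 i, J i && (X i \in S) & w = z' i).
Proof.
rewrite inE => /orP[/imsetP[u]|/imsetP[i]]; rewrite inE.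
  by move=> /andP[uS uO] ->; left; exists u; rewrite ?uO ?eqxx.
by move=> h ->; right; exists i.
Qed.

Lemma proj_base_neq0 S u : u \in S -> u \in outside -> proj_base S != set0.
Proof. by move=> uS uO; apply/set0Pn; exists (to_base u); apply: proj_base_mem. Qed.

Lemma proj_base_connect_xz S i :
  J i -> X i \in S -> connect (induced (proj_base S)) (x' i) (z' i).
Proof.
by move=> Ji XS; apply: (connect_induced_edgeC (adj_z'x' i));
  rewrite ?proj_base_x ?proj_base_z.
Qed.

Lemma proj_base_connect_zy S i :
  J i -> X i \in S -> Y i \in S -> connect (induced (proj_base S)) (z' i) (y' i).
Proof.
by move=> Ji XS YS; apply: (connect_induced_edge (adj_z'y' i));
  rewrite ?proj_base_y ?proj_base_z.
Qed.

(* Turns the edges of [S] into paths of [proj_base S], witnessing its connectivity. *)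
Definition base_retract S u : G' :=
  if piece_of u is Some i then
    if J i && (X i \in S) then z' i else if X i \in S then x' i else y' i
  else to_base u.

Definition XY_in_J S := forall i, X i \in S -> Y i \in S -> J i.

Lemma base_retract_outside_edge S u v : XY_in_J S ->
  u \in S -> v \in S -> gadj u v -> u \in outside -> v \in outside ->
  connect (induced (proj_base S)) (base_retract S u) (base_retract S v).
Proof.
move=> SJ uS vS uv uO vO; rewrite /base_retract !piece_of_outside //.
case: (to_base_edge uv) => [a|->|[i [[eu ev]|[eu ev]]]]; subst.
- by apply: connect_induced_edge; rewrite // proj_base_mem.
- exact: connect0.
- rewrite to_base_X to_base_Y; have Ji := SJ i uS vS.
  exact: connect_trans (proj_base_connect_xz Ji uS) (proj_base_connect_zy Ji uS vS).
- rewrite to_base_X to_base_Y connect_inducedC; have Ji := SJ i vS uS.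
  exact: connect_trans (proj_base_connect_xz Ji vS) (proj_base_connect_zy Ji vS uS).
Qed.

Lemma base_retract_exit S u v i : XY_in_J S ->
  u \in S -> v \in S -> gadj u v -> inner i u -> v \in outside ->
  connect (induced (proj_base S)) (base_retract S u) (base_retract S v).
Proof.
move=> SJ uS vS uv iu vO; rewrite /base_retract (piece_of_inner iu) piece_of_outside //.
have : (v == X i) || (v == Y i).
  by case/or3P: (inner_edge uv iu) => [|->|->]; rewrite ?orbT // outsideF.
case/orP=> /eqP ev; subst v.
- rewrite to_base_X; case: ifP => [/andP[Ji XS]|_].
    by rewrite connect_inducedC proj_base_connect_xz.
  by rewrite vS connect0.
- rewrite to_base_Y; case: ifP => [/andP[Ji XS]|nJ]; first exact: proj_base_connect_zy.
  case: ifP => XS; last exact: connect0.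
  by move: nJ; rewrite (SJ i XS vS) XS.
Qed.

Lemma base_retract_edge S u v : XY_in_J S ->
  u \in S -> v \in S -> gadj u v ->
  connect (induced (proj_base S)) (base_retract S u) (base_retract S v).
Proof.
move=> SJ uS vS uv.
have [uO|/not_outside[i iu]] := boolP (u \in outside);
  have [vO|/not_outside[j jv]] := boolP (v \in outside).
- exact: base_retract_outside_edge.
- by rewrite connect_inducedC; apply: base_retract_exit jv uO; rewrite // gadj_sym.
- exact: base_retract_exit iu vO.
have iv : inner i v.
  case/or3P: (inner_edge uv iu) => [//|/eqP e|/eqP e]; subst v.
  - by move: (X_not_inner i j); rewrite jv.
  - by move: (Y_not_inner i j); rewrite jv.
by rewrite /base_retract (piece_of_inner iu) (piece_of_inner iv) connect0.
Qed.

Definition base_good S :=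
  [/\ S != set0, connected S, forall i, ~~ (S \subset interior i) & XY_in_J S].

Lemma proj_base_connected S : base_good S -> connected (proj_base S).
Proof.
case=> neS cS nin SJ.
apply: (@connected_map _ _ S _ (base_retract S)) cS _ _.
  by move=> u v uS vS; apply: base_retract_edge.
move=> w /proj_baseP[[u uS /andP[uO /eqP->]]|[i /andP[Ji XS] ->]].
  by exists u => //; rewrite /base_retract (piece_of_outside uO) connect0.
exists (X i) => //; rewrite /base_retract (piece_of_outside (X_outside i)) to_base_X.
exact: proj_base_connect_xz.
Qed.

Lemma proj_base_disjoint S S' : [disjoint S & S'] -> [disjoint proj_base S & proj_base S'].
Proof.
move=> dj; rewrite -setI_eq0; apply/set0Pn => -[w]; rewrite inE.
case/andP=> /proj_baseP[[u uS /andP[uO /eqP->]]|[i /andP[Ji XS] ->]]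
            /proj_baseP[[v vS /andP[vO /eqP e]]|[i' /andP[Ji' XS'] e]].
- by have eu := to_base_inj uO vO e; subst v; rewrite (disjointFr dj uS) in vS.
- by move: (to_base_z i' u); rewrite e eqxx outsideF.
- by move: (to_base_z i v); rewrite -e eqxx outsideF.
- by have ei := z'_inj e; subst i'; rewrite (disjointFr dj XS) in XS'.
Qed.

Lemma proj_base_disjoint_z S i : ~~ J i -> [disjoint proj_base S & [set z' i]].
Proof.
move=> nJ; rewrite disjoint_sym disjoints1; apply/negP.
case/proj_baseP=> [[u uS /andP[uO /eqP e]]|[i' /andP[Ji' _] e]].
  by move: (to_base_z i u); rewrite -e eqxx outsideF.
by have ei := z'_inj e; subst i'; rewrite Ji' in nJ.
Qed.

Lemma proj_base_linked S S' : base_good S -> base_good S' -> [disjoint S & S'] ->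
  linked S S' ->
  (forall i, (X i \in S) || (Y i \in S) -> (X i \in S') || (Y i \in S') -> J i) ->
  linked (proj_base S) (proj_base S').
Proof.
move=> [_ cS nS _] [_ cS' nS' _] dj [u [v [uS vS uv]]] XY_J.
have via_piece i : u \in piece i -> v \in piece i -> linked (proj_base S) (proj_base S').
  move=> uC vC.
  have XYS := connected_meets_XY cS uS uC (nS i).
  have XYS' := connected_meets_XY cS' vS vC (nS' i).
  have Ji := XY_J i XYS XYS'.
  case/orP: (XY_split XYS XYS' dj) => /andP[XS YS'].
    by exists (z' i), (y' i); rewrite proj_base_z ?proj_base_y ?adj_z'y'.
  by exists (y' i), (z' i); rewrite proj_base_z ?proj_base_y // gadj_sym adj_z'y'.
have [uO|/not_outside[i iu]] := boolP (u \in outside); last first.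
  by apply: (via_piece i); [rewrite inner_piece|rewrite inE; apply: inner_edge uv iu].
have [vO|/not_outside[i iv]] := boolP (v \in outside); last first.
  by apply: (via_piece i); [apply: edge_inner_piece uv iv|rewrite inner_piece].
case: (to_base_edge uv) => [a|e|[i [[eu ev]|[eu ev]]]]; subst.
- by exists (to_base u), (to_base v); rewrite !proj_base_mem.
- by have eu := to_base_inj uO vO e; subst v; rewrite (disjointFr dj uS) in vS.
- by apply: (via_piece i); rewrite ?X_piece ?Y_piece.
- by apply: (via_piece i); rewrite ?X_piece ?Y_piece.
Qed.

Lemma proj_base_linked_z S i : (X i \in S) || (Y i \in S) ->
  linked (proj_base S) [set z' i].
Proof.
case/orP=> h.
  by exists (x' i), (z' i); rewrite proj_base_x // set11 gadj_sym adj_z'x'.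
by exists (y' i), (z' i); rewrite proj_base_y // set11 gadj_sym adj_z'y'.
Qed.

End BaseProjection.

Section Model.
Variables (k : nat) (H1 H2 : {set G}) (C : 'I_k -> {set G}).
Hypothesis model : K2model H1 H2 predT C.

Lemma model_hubs :
  [/\ H1 != set0, H2 != set0, [disjoint H1 & H2], connected H1 & connected H2].
Proof. by case: model. Qed.

Lemma model_spoke j : [/\ C j != set0, connected (C j),
  [disjoint C j & H1] /\ [disjoint C j & H2], linked H1 (C j) & linked H2 (C j)].
Proof. by case: model => _ h _; apply: h. Qed.

Lemma model_disjoint j j' : j != j' -> [disjoint C j & C j'].
Proof. by case: model => _ _ h; apply: h. Qed.

Definition spoke_in i j := C j \subset interior i.
Definition no_spoke_in i := [forall j, ~~ spoke_in i j].

Lemma spoke_in_inner i j u : spoke_in i j -> u \in C j -> inner i u.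
Proof. by move=> ij uC; have := subsetP ij u uC; rewrite inE. Qed.

Lemma hub_meets_XY i j H : spoke_in i j -> connected H -> ~~ (H \subset interior i) ->
  linked H (C j) -> (X i \in H) || (Y i \in H).
Proof.
move=> ij cH nH [u [v [uH vC uv]]].
exact: connected_meets_XY cH uH (edge_inner_piece uv (spoke_in_inner ij vC)) nH.
Qed.

Lemma hubs_XY i : ~~ (H1 \subset interior i) -> ~~ (H2 \subset interior i) ->
  ~~ no_spoke_in i -> ((X i \in H1) && (Y i \in H2)) || ((Y i \in H1) && (X i \in H2)).
Proof.
move=> n1 n2; rewrite negb_forall => /existsP[j]; rewrite negbK => ij.
have [_ _ dj c1 c2] := model_hubs; have [_ _ _ a1 a2] := model_spoke j.
exact: XY_split (hub_meets_XY ij c1 n1 a1) (hub_meets_XY ij c2 n2 a2) dj.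
Qed.

Lemma spoke_XY_no_spoke_in i j : ~~ (H1 \subset interior i) -> ~~ (H2 \subset interior i) ->
  (X i \in C j) || (Y i \in C j) -> no_spoke_in i.
Proof.
move=> n1 n2 h; apply: contraT => /(hubs_XY n1 n2).
have [_ _ [d1 d2] _ _] := model_spoke j.
by case/orP=> /andP[a b]; case/orP: h => h;
  rewrite ?(disjointFr d1 h) ?(disjointFr d2 h) in a b.
Qed.

Lemma card_spokes_XY i : #|[pred j | (X i \in C j) && (Y i \in C j)]| <= 1.
Proof.
apply/card_le1_eqP => a b /andP[Xa _] /andP[Xb _]; apply/eqP; apply: contraT => nab.
rewrite eq_sym in nab.
by rewrite (disjointFr (model_disjoint nab) Xa) in Xb.
Qed.

Section HubInPiece.
Variable i : 'I_t.
Hypothesis H1_in : H1 \subset interior i.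

Let own2 := ~~ (H2 \subset interior i).
Let P j := ~~ ((X i \in C j) && (Y i \in C j)).

Lemma hub_in_piece_hubs : [/\ proj_piece i H1 false != set0,
  proj_piece i H2 own2 != set0, [disjoint proj_piece i H1 false & proj_piece i H2 own2],
  connected (proj_piece i H1 false) & connected (proj_piece i H2 own2)].
Proof.
have [ne1 ne2 dj c1 c2] := model_hubs.
have XH2 : ~~ own2 -> X i \in H2 = false by rewrite negbK; apply: X_notin_interior.
split.
- case/set0Pn: ne1 => u uH; apply: (proj_piece_neq0 uH).
  by have := subsetP H1_in u uH; rewrite inE => /inner_piece ->.
- case/set0Pn: ne2 => u uH; apply: (proj_piece_neq0 uH).
  have [o|o] := boolP own2; rewrite ?orbT // orbF.
  by move: o; rewrite negbK => /subsetP/(_ u uH); rewrite inE => /inner_piece.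
- exact: proj_piece_disjoint.
- by apply: proj_piece_connected => //; rewrite X_notin_interior.
- apply: proj_piece_connected => //.
    by have [o|o] := boolP own2; rewrite //= XH2.
  move=> o; have [d|] := boolP [disjoint H2 & piece i]; rewrite ?orbT //.
  rewrite -setI_eq0 => /set0Pn[u]; rewrite inE => /andP[uH uC].
  by case/orP: (connected_meets_XY c2 uH uC o) => ->; rewrite ?orbT.
Qed.

Lemma hub_in_piece_K2model :
  K2model (proj_piece i H1 false) (proj_piece i H2 own2) P
    (fun j => proj_piece i (C j) false).
Proof.
split; first exact: hub_in_piece_hubs.
  move=> j Pj; have [neC cC [d1 d2] a1 a2] := model_spoke j.
  have [u [v [uH vC uv]]] := a1.
  have vP : v \in piece i.
    by rewrite inE; apply: inner_edge uv _; have := subsetP H1_in u uH; rewrite inE.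
  split.
  - by apply: (proj_piece_neq0 vC); rewrite vP.
  - exact: proj_piece_connected.
  - by split; apply: proj_piece_disjoint; rewrite ?andbF.
  - by apply: proj_piece_linked_interior; rewrite 1?disjoint_sym ?H1_in.
  - have [o|o] := boolP own2; last first.
      move: o; rewrite negbK => H2_in.
      by apply: proj_piece_linked_interior; rewrite 1?disjoint_sym ?H2_in ?orbT.
    have [XYC|/norP[nX nY]] := boolP ((X i \in C j) || (Y i \in C j)).
      exact: proj_piece_linked_z.
    have iv : inner i v.
      by move: vP; rewrite inE => /or3P[//|/eqP e|/eqP e]; subst v;
        [rewrite vC in nX|rewrite vC in nY].
    apply: proj_piece_linked_interior; rewrite 1?disjoint_sym ?andbF //.
    by rewrite (connected_sub_interior cC vC iv nX nY) orbT.
by move=> j j' _ _ nj; apply: proj_piece_disjoint; rewrite ?model_disjoint.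
Qed.

End HubInPiece.

Lemma K2_minor_hub_in_piece i m n : H1 \subset interior i -> 1 < m -> k = m * n ->
  0 < n -> hasMinor (Gs i) (K2 n).
Proof.
move=> H1_in m_gt1 km n_gt0; apply: K2model_minor (hub_in_piece_K2model H1_in) _.
have := cardC [pred j | (X i \in C j) && (Y i \in C j)].
rewrite card_ord; have := card_spokes_XY i.
have : 2 * n <= m * n by rewrite leq_mul2r m_gt1 orbT.
set a := #|_|; set p := #|_| => *; lia.
Qed.

Lemma K2_minor_spokes_in_piece i n :
  ~~ (H1 \subset interior i) -> ~~ (H2 \subset interior i) ->
  0 < n -> n <= #|spoke_in i| -> hasMinor (Gs i) (K2 n).
Proof.
move=> n1 n2 n_gt0 nle.
have [ne1 ne2 dj c1 c2] := model_hubs.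
have used : ~~ no_spoke_in i.
  rewrite negb_forall; apply/existsP.
  by case/card_gt0P: (leq_trans n_gt0 nle) => j ij; exists j; rewrite negbK.
have hXY := hubs_XY n1 n2 used.
have hub_ok (H : {set G}) : (X i \in H) || (Y i \in H) -> ~~ ((X i \in H) && (Y i \in H)) ->
    H != set0 -> connected H -> proj_piece i H false != set0 /\
                               connected (proj_piece i H false).
  move=> XYH nXY neH cH; split; last exact: proj_piece_connected.
  by case/orP: XYH => h; apply: (proj_piece_neq0 h); rewrite ?X_piece ?Y_piece.
have [ne1' c1'] : proj_piece i H1 false != set0 /\ connected (proj_piece i H1 false).
  by apply: hub_ok; case/orP: hXY => /andP[a b]; rewrite ?a ?b ?(disjointFr dj a)
     ?(disjointFl dj b) ?andbF ?orbT.
have [ne2' c2'] : proj_piece i H2 false != set0 /\ connected (proj_piece i H2 false).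
  by apply: hub_ok; case/orP: hXY => /andP[a b]; rewrite ?a ?b ?(disjointFr dj a)
     ?(disjointFl dj b) ?andbF ?orbT.
apply: (@K2model_minor _ (proj_piece i H1 false) (proj_piece i H2 false) _ (spoke_in i)
  (fun j => proj_piece i (C j) false)) nle.
split; first by split=> //; apply: proj_piece_disjoint.
  move=> j ij; have [neC cC [d1 d2] a1 a2] := model_spoke j.
  have Cj_in : C j \subset interior i := ij.
  split.
  - by case/set0Pn: neC => v vC; apply: (proj_piece_neq0 vC);
      rewrite (inner_piece (spoke_in_inner ij vC)).
  - by apply: proj_piece_connected => //; rewrite X_notin_interior.
  - by split; apply: proj_piece_disjoint.
  - by apply: proj_piece_linked_interior; rewrite 1?disjoint_sym // Cj_in orbT.
  - by apply: proj_piece_linked_interior; rewrite 1?disjoint_sym // Cj_in orbT.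
by move=> j j' _ _ nj; apply: proj_piece_disjoint; rewrite ?model_disjoint.
Qed.

Section NoHubInPiece.
Hypothesis H1_out : forall i, ~~ (H1 \subset interior i).
Hypothesis H2_out : forall i, ~~ (H2 \subset interior i).

Definition outer_spoke j := [forall i, ~~ spoke_in i j].

Lemma hubs_meet_XY i : ~~ no_spoke_in i ->
  ((X i \in H1) || (Y i \in H1)) && ((X i \in H2) || (Y i \in H2)).
Proof. by move/(hubs_XY (H1_out i) (H2_out i)) => /orP[] /andP[-> ->]; rewrite ?orbT. Qed.

Lemma base_good_hubs : base_good no_spoke_in H1 /\ base_good no_spoke_in H2.
Proof.
have [ne1 ne2 dj c1 c2] := model_hubs.
split; split=> // i XH YH; apply: contraT => /(hubs_XY (H1_out i) (H2_out i)).
  by case/orP=> /andP[_ b]; rewrite ?(disjointFr dj YH) ?(disjointFr dj XH) in b.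
by case/orP=> /andP[a _]; rewrite (disjointFr dj a) in XH YH.
Qed.

Lemma base_good_spoke j : outer_spoke j -> base_good no_spoke_in (C j).
Proof.
move=> oj; have [neC cC _ _ _] := model_spoke j.
split=> // [i|i XC _]; first by move/forallP: oj; apply.
by apply: (spoke_XY_no_spoke_in (j := j) (H1_out i) (H2_out i)); rewrite XC.
Qed.

Definition base_index (w : 'I_k + 'I_t) :=
  match w with inl j => outer_spoke j | inr i => ~~ no_spoke_in i end.

Definition base_spoke (w : 'I_k + 'I_t) : {set G'} :=
  match w with inl j => proj_base no_spoke_in (C j) | inr i => [set z' i] end.

Lemma base_outer_spoke j : outer_spoke j ->
  [/\ base_spoke (inl j) != set0, connected (base_spoke (inl j)),
    [disjoint base_spoke (inl j) & proj_base no_spoke_in H1] /\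
    [disjoint base_spoke (inl j) & proj_base no_spoke_in H2],
    linked (proj_base no_spoke_in H1) (base_spoke (inl j)) &
    linked (proj_base no_spoke_in H2) (base_spoke (inl j))].
Proof.
move=> oj; have [neC cC [d1 d2] a1 a2] := model_spoke j.
have [g1 g2] := base_good_hubs; have gC := base_good_spoke oj.
have XY_J i : (X i \in C j) || (Y i \in C j) -> no_spoke_in i.
  exact: (spoke_XY_no_spoke_in (H1_out i) (H2_out i)).
rewrite /base_spoke; split.
- have [u uC uO] := connected_meets_outside neC cC (fun i => (forallP oj) i).
  exact: proj_base_neq0 uC uO.
- exact: proj_base_connected.
- by split; apply: proj_base_disjoint.
- by apply: proj_base_linked a1 _ => // [|i _]; rewrite 1?disjoint_sym //; apply: XY_J.
- by apply: proj_base_linked a2 _ => // [|i _]; rewrite 1?disjoint_sym //; apply: XY_J.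
Qed.

Lemma base_K2model :
  K2model (proj_base no_spoke_in H1) (proj_base no_spoke_in H2) base_index base_spoke.
Proof.
have [ne1 ne2 dj c1 c2] := model_hubs; have [g1 g2] := base_good_hubs.
split.
- split.
  + by have [u uH uO] := connected_meets_outside ne1 c1 H1_out; apply: proj_base_neq0 uH uO.
  + by have [u uH uO] := connected_meets_outside ne2 c2 H2_out; apply: proj_base_neq0 uH uO.
  + exact: proj_base_disjoint.
  + exact: proj_base_connected.
  + exact: proj_base_connected.
- case=> [j /base_outer_spoke //|i /= used].
  have /andP[XY1 XY2] := hubs_meet_XY used.
  split.
  + by apply/set0Pn; exists (z' i); rewrite set11.
  + exact: connected_set1.
  + by split; rewrite disjoint_sym; apply: proj_base_disjoint_z.
  + exact: proj_base_linked_z.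
  + exact: proj_base_linked_z.
- case=> [j|i] [j'|i'] /= Qw Qw' nw.
  + by apply: proj_base_disjoint; apply: model_disjoint; apply: contra nw => /eqP->.
  + exact: proj_base_disjoint_z.
  + by rewrite disjoint_sym; apply: proj_base_disjoint_z.
  + by rewrite disjoints1 inE; apply: contra nw => /eqP/z'_inj ->.
Qed.

Lemma K2_minor_base m n : k = m * n -> 0 < n -> (forall i, #|spoke_in i| < n) ->
  hasMinor G' (K2 m).
Proof.
move=> km n_gt0 small; apply: K2model_minor base_K2model _.
rewrite card_sum_pred.
apply: (@leq_outer_classes k t m n outer_spoke spoke_in) => //.
- by move=> j; rewrite negb_forall => /existsP[i]; rewrite negbK; exists i.
- by move=> j i /forallP.
- move=> j i i' ij i'j; have [neC _ _ _ _] := model_spoke j.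
  case/set0Pn: neC => v vC.
  exact: inner_uniq (spoke_in_inner ij vC) (spoke_in_inner i'j vC).
- by move=> i; rewrite /no_spoke_in negb_forall; apply: eq_existsb => j; rewrite negbK.
Qed.

End NoHubInPiece.

End Model.

Lemma K2_minor_decomposition k m n : 0 < n -> (forall i : 'I_t, 1 < m) -> k = m * n ->
  hasMinor G (K2 k) -> hasMinor G' (K2 m) \/ exists i, hasMinor (Gs i) (K2 n).
Proof.
move=> n_gt0 m_gt1 km /minor_K2model [H1 [H2 [C model]]].
have [i H1_in|H1_out] := pickP (fun i => H1 \subset interior i).
  by right; exists i; exact: (K2_minor_hub_in_piece model H1_in (m_gt1 i) km n_gt0).
have [i H2_in|H2_out] := pickP (fun i => H2 \subset interior i).
  right; exists i.
  exact: (K2_minor_hub_in_piece (K2modelC model) H2_in (m_gt1 i) km n_gt0).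
have H1_out' i : ~~ (H1 \subset interior i) by rewrite H1_out.
have H2_out' i : ~~ (H2 \subset interior i) by rewrite H2_out.
have [i many|few] := pickP (fun i => n <= #|spoke_in C i|).
  by right; exists i; exact: (K2_minor_spokes_in_piece model (H1_out' i) (H2_out' i) n_gt0 many).
left; apply: (K2_minor_base model H1_out' H2_out' km n_gt0) => i.
by rewrite ltnNge few.
Qed.

End Decomposition.

Lemma deg2_adj (H : graph) (a b c : H) : deg2 a b c -> [/\ gadj a b, gadj a c & b != c].
Proof. by case=> ne h; split=> //; apply/h; [left|right]. Qed.

Section TwoSumDecomposition.
Variables (G G' : graph) (t : nat) (Gs : 'I_t -> graph).
Variables (z' x' y' : 'I_t -> G') (z x y : forall i, Gs i).
Variable f : G -> sumV z' z x y.
Variable g : sumV z' z x y -> G.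
Hypothesis fK : cancel f g.
Hypothesis gK : cancel g f.
Hypothesis sum : sum_ok z' x' y' z x y.
Hypothesis f_adj : forall u v, gadj u v <-> sumadj x' y' (f u) (f v).

Definition Zs := [set z' i | i in 'I_t].

Lemma adj_z'x' i : gadj (z' i) (x' i). Proof. by case: sum => _ /(_ i) /deg2_adj[]. Qed.
Lemma adj_z'y' i : gadj (z' i) (y' i). Proof. by case: sum => _ /(_ i) /deg2_adj[]. Qed.
Lemma adj_zx i : gadj (z i) (x i). Proof. by case: sum => /(_ i) /deg2_adj[]. Qed.
Lemma adj_zy i : gadj (z i) (y i). Proof. by case: sum => /(_ i) /deg2_adj[]. Qed.
Lemma x_neq_y i : x i != y i. Proof. by case: sum => /(_ i) /deg2_adj[]. Qed.
Lemma x'_neq_y' i : x' i != y' i. Proof. by case: sum => _ /(_ i) /deg2_adj[]. Qed.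
Lemma z'_inj i j : z' i = z' j -> i = j.
Proof.
move=> e; apply/eqP; apply: contraT => nij.
by case: sum => _ _ /(_ _ _ nij) [/eqP].
Qed.

Lemma notin_Zs_of_adj (a : G') i : gadj (z' i) a -> a \notin Zs.
Proof.
move=> za; apply/imsetP => -[j _ e]; subst a.
case: (eqVneq i j) => [eij|nij]; first by subst j; rewrite gadj_irr in za.
by case: sum => _ _ /(_ _ _ nij) [_]; rewrite za.
Qed.

Lemma x'_notin_Zs i : x' i \notin Zs. Proof. exact: notin_Zs_of_adj (adj_z'x' i). Qed.
Lemma y'_notin_Zs i : y' i \notin Zs. Proof. exact: notin_Zs_of_adj (adj_z'y' i). Qed.

Definition X i : G := g (inl (exist _ (x' i) (x'_notin_Zs i))).
Definition Y i : G := g (inl (exist _ (y' i) (y'_notin_Zs i))).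

Definition inner i (u : G) : bool :=
  match f u with inl _ => false | inr p => tag p == i end.
Definition to_base (u : G) : G' :=
  match f u with inl s => val s | inr p => z' (tag p) end.

Definition piece_vertex j := {v : Gs j | [&& v != z j, v != x j & v != y j]}.

Lemma img0_inl a w : img0 z' z x y a = Some w -> exists s, w = inl s /\ val s = a.
Proof. by rewrite /img0; case: insubP => [s _ e [<-]|_ //]; exists s. Qed.

Lemma img0_notin_Zs a (h : a \notin Zs) : img0 z' z x y a = Some (inl (exist _ a h)).
Proof. by rewrite /img0 insubT. Qed.

Lemma f_X i : f (X i) = inl (exist _ (x' i) (x'_notin_Zs i)). Proof. exact: gK. Qed.
Lemma f_Y i : f (Y i) = inl (exist _ (y' i) (y'_notin_Zs i)). Proof. exact: gK. Qed.

Lemma img0_x' i : img0 z' z x y (x' i) = Some (f (X i)).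
Proof. by rewrite (img0_notin_Zs (x'_notin_Zs i)) f_X. Qed.
Lemma img0_y' i : img0 z' z x y (y' i) = Some (f (Y i)).
Proof. by rewrite (img0_notin_Zs (y'_notin_Zs i)) f_Y. Qed.

Lemma f_inj : injective f. Proof. exact: can_inj fK. Qed.

Lemma imgi_spec j (a : Gs j) w : imgi z' x' y' z x y a = Some w ->
  [\/ a = x j /\ w = f (X j), a = y j /\ w = f (Y j) |
      exists s : piece_vertex j, w = inr (Tagged piece_vertex s) /\ val s = a].
Proof.
rewrite /imgi; case: eqP => [->|nx]; first by rewrite img0_x' => -[<-]; constructor 1.
case: eqP => [->|ny]; first by rewrite img0_y' => -[<-]; constructor 2.
case: insubP => [s _ e|_] //= [<-]; constructor 3; by exists s.
Qed.

Lemma imgi_val j (s : piece_vertex j) : imgi z' x' y' z x y (val s) = Some (inr (Tagged piece_vertex s)).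
Proof.
have /and3P[_ nx ny] := valP s.
by rewrite /imgi (negbTE nx) (negbTE ny) valK.
Qed.

Lemma imgi_x j : imgi z' x' y' z x y (x j) = Some (f (X j)).
Proof. by rewrite /imgi eqxx img0_x'. Qed.
Lemma imgi_y j : imgi z' x' y' z x y (y j) = Some (f (Y j)).
Proof. by rewrite /imgi eqxx eq_sym (negbTE (x_neq_y j)) img0_y'. Qed.

Lemma imgi_z j : imgi z' x' y' z x y (z j) = None.
Proof.
have zx : z j != x j by apply: contraTneq (adj_zx j) => ->; rewrite gadj_irr.
have zy : z j != y j by apply: contraTneq (adj_zy j) => ->; rewrite gadj_irr.
by rewrite /imgi (negbTE zx) (negbTE zy) insubN //= eqxx.
Qed.

Lemma imgi_inj j (a b : Gs j) w : imgi z' x' y' z x y a = Some w ->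
  imgi z' x' y' z x y b = Some w -> a = b.
Proof.
case/imgi_spec=> [[-> ->]|[-> ->]|[s [-> <-]]];
  case/imgi_spec=> [[-> e]|[-> e]|[s' [e <-]]] //.
- by move/f_inj: e => e; move: (f_equal to_base e); rewrite /to_base f_X f_Y /= => e';
  move: (x'_neq_y' j); rewrite e' eqxx.
- by rewrite f_X in e.
- by move/f_inj: e => e; move: (f_equal to_base e); rewrite /to_base f_X f_Y /= => e';
  move: (x'_neq_y' j); rewrite e' eqxx.
- by rewrite f_Y in e.
- by rewrite f_X in e.
- by rewrite f_Y in e.
- by case: e => e; rewrite (eq_from_Tagged e).
Qed.

Definition to_piece i (u : G) : Gs i :=
  odflt (z i) [pick a | imgi z' x' y' z x y a == Some (f u)].

Lemma to_piece_img i u a : imgi z' x' y' z x y a = Some (f u) -> to_piece i u = a.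
Proof.
move=> e; rewrite /to_piece; case: pickP => [b /eqP eb|/(_ a)]; last by rewrite e eqxx.
exact: imgi_inj eb e.
Qed.

Lemma to_piece_noimg i u : (forall a : Gs i, imgi z' x' y' z x y a != Some (f u)) -> to_piece i u = z i.
Proof. by move=> h; rewrite /to_piece; case: pickP => // b; rewrite (negbTE (h b)). Qed.

Lemma imgi_exists i u :
  (exists a : Gs i, imgi z' x' y' z x y a = Some (f u)) <-> [|| inner i u, u == X i | u == Y i].
Proof.
split.
  case=> a /imgi_spec[[_ /f_inj ->]|[_ /f_inj ->]|[s [e _]]]; rewrite ?eqxx ?orbT //.
  by rewrite /inner e /= eqxx.
case/or3P=> [|/eqP->|/eqP->]; last 2 first.
- by exists (x i); apply: imgi_x.
- by exists (y i); apply: imgi_y.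
rewrite /inner; case E: (f u) => [s|[j s]] //= /eqP eji; subst j.
by exists (val s); rewrite imgi_val.
Qed.

Lemma inner_inl u s i : f u = inl s -> inner i u = false.
Proof. by rewrite /inner => ->. Qed.

Lemma inner_inr u j (s : piece_vertex j) i : f u = inr (Tagged piece_vertex s) -> inner i u = (j == i).
Proof. by rewrite /inner => ->. Qed.

Lemma X_not_inner i j : ~~ inner j (X i). Proof. by rewrite /inner f_X. Qed.
Lemma Y_not_inner i j : ~~ inner j (Y i). Proof. by rewrite /inner f_Y. Qed.

Lemma inner_uniq i j u : inner i u -> inner j u -> i = j.
Proof. by rewrite /inner; case: (f u) => // p /eqP <- /eqP. Qed.

Lemma inner_edge i u v : gadj u v -> inner i u -> [|| inner i v, v == X i | v == Y i].
Proof.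
move/f_adj => [[a [b [ab ea eb]]] | [j [a [b [ab ea eb]]]]] iu.
  by case: (img0_inl ea) => s [e _]; rewrite (inner_inl i e) in iu.
case: (imgi_spec ea) => [[_ e]|[_ e]|[s [e _]]].
- by move: iu; rewrite (f_inj e) (negbTE (X_not_inner _ _)).
- by move: iu; rewrite (f_inj e) (negbTE (Y_not_inner _ _)).
- rewrite (inner_inr i e) in iu; move/eqP: iu => iu; subst j.
  by apply/imgi_exists; exists b.
Qed.

Lemma to_base_img j (a : Gs j) u : imgi z' x' y' z x y a = Some (f u) ->
  [\/ u = X j /\ to_base u = x' j, u = Y j /\ to_base u = y' j | to_base u = z' j].
Proof.
case/imgi_spec=> [[_ /f_inj ->]|[_ /f_inj ->]|[s [e _]]].
- by constructor 1; rewrite /to_base f_X.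
- by constructor 2; rewrite /to_base f_Y.
- by constructor 3; rewrite /to_base e.
Qed.

Lemma to_base_edge u v : gadj u v ->
  [\/ gadj (to_base u) (to_base v), to_base u = to_base v |
      exists i, (u = X i /\ v = Y i) \/ (u = Y i /\ v = X i)].
Proof.
move/f_adj => [[a [b [ab ea eb]]] | [j [a [b [ab ea eb]]]]].
  case: (img0_inl ea) => s [e1 e2]; case: (img0_inl eb) => s' [e1' e2'].
  by constructor 1; rewrite /to_base e1 e1' /= e2 e2'.
case: (to_base_img ea) => [[eu pu]|[eu pu]|pu]; case: (to_base_img eb) => [[ev pv]|[ev pv]|pv].
- by constructor 2; rewrite pu pv.
- by constructor 3; exists j; left.
- by constructor 1; rewrite pu pv gadj_sym adj_z'x'.
- by constructor 3; exists j; right.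
- by constructor 2; rewrite pu pv.
- by constructor 1; rewrite pu pv gadj_sym adj_z'y'.
- by constructor 1; rewrite pu pv adj_z'x'.
- by constructor 1; rewrite pu pv adj_z'y'.
- by constructor 2; rewrite pu pv.
Qed.

Lemma in_piece i u : (u \in piece inner X Y i) = [|| inner i u, u == X i | u == Y i].
Proof. by rewrite inE. Qed.

Lemma to_piece_X i : to_piece i (X i) = x i. Proof. exact: to_piece_img (imgi_x i). Qed.
Lemma to_piece_Y i : to_piece i (Y i) = y i. Proof. exact: to_piece_img (imgi_y i). Qed.

Lemma to_piece_z i u : (to_piece i u == z i) = (u \notin piece inner X Y i).
Proof.
rewrite in_piece; case: (boolP [|| _, _ | _]) => uC /=.
  have [a ea] := (imgi_exists i u).2 uC.
  rewrite (to_piece_img ea); apply/negP => /eqP eaz; subst a.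
  by rewrite imgi_z in ea.
rewrite to_piece_noimg ?eqxx // => a; apply/negP => /eqP ea.
by apply: (negP uC); apply/(imgi_exists i u).1; exists a.
Qed.

Lemma to_piece_inj i u v : u \in piece inner X Y i -> v \in piece inner X Y i ->
  to_piece i u = to_piece i v -> u = v.
Proof.
rewrite !in_piece => /(imgi_exists i u).2 [a ea] /(imgi_exists i v).2 [b eb].
rewrite (to_piece_img ea) (to_piece_img eb) => eab; subst b.
by apply: f_inj; rewrite ea in eb; case: eb.
Qed.

Lemma not_inner_cases i u : ~~ inner i u -> [\/ u = X i, u = Y i | to_piece i u = z i].
Proof.
move=> niu; case: (eqVneq u (X i)) => [->|nx]; first by constructor 1.
case: (eqVneq u (Y i)) => [->|ny]; first by constructor 2.
by constructor 3; apply/eqP; rewrite to_piece_z in_piece (negbTE niu) (negbTE nx) (negbTE ny).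
Qed.

Lemma to_piece_edge_not_inner i u v : ~~ inner i u -> ~~ inner i v ->
  [\/ gadj (to_piece i u) (to_piece i v), to_piece i u = to_piece i v |
      (u = X i /\ v = Y i) \/ (u = Y i /\ v = X i)].
Proof.
move=> /not_inner_cases[->|->|pu] /not_inner_cases[->|->|pv].
- by constructor 2.
- by constructor 3; left.
- by constructor 1; rewrite to_piece_X pv gadj_sym adj_zx.
- by constructor 3; right.
- by constructor 2.
- by constructor 1; rewrite to_piece_Y pv gadj_sym adj_zy.
- by constructor 1; rewrite to_piece_X pu adj_zx.
- by constructor 1; rewrite to_piece_Y pu adj_zy.
- by constructor 2; rewrite pu pv.
Qed.

Lemma imgi_not_inner j (a : Gs j) u i : imgi z' x' y' z x y a = Some (f u) -> j != i ->
  ~~ inner i u.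
Proof.
move=> ea nji; case: (imgi_spec ea) => [[_ /f_inj ->]|[_ /f_inj ->]|[s [e _]]].
- exact: X_not_inner.
- exact: Y_not_inner.
- by rewrite (inner_inr i e).
Qed.

Lemma to_piece_edge i u v : gadj u v ->
  [\/ gadj (to_piece i u) (to_piece i v), to_piece i u = to_piece i v |
      (u = X i /\ v = Y i) \/ (u = Y i /\ v = X i)].
Proof.
move/f_adj => [[a [b [ab ea eb]]] | [j [a [b [ab ea eb]]]]].
  case: (img0_inl ea) => s [e1 _]; case: (img0_inl eb) => s' [e1' _].
  by apply: to_piece_edge_not_inner; [rewrite (inner_inl i e1)|rewrite (inner_inl i e1')].
case: (eqVneq j i) => [eji|nji].
  by subst j; constructor 1; rewrite (to_piece_img ea) (to_piece_img eb).
exact: to_piece_edge_not_inner (imgi_not_inner ea nji) (imgi_not_inner eb nji).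
Qed.

Lemma to_base_z i u : (to_base u == z' i) = inner i u.
Proof.
rewrite /to_base /inner; case: (f u) => [s|p].
  apply/negbTE; apply: contra (valP s) => /eqP->; exact: imset_f.
by apply/eqP/eqP => [/z'_inj|->].
Qed.

Lemma f_outside w : w \in outside inner -> exists s, f w = inl s.
Proof.
rewrite inE => /forallP h; case E: (f w) => [s|p]; first by exists s.
by move: (h (tag p)); rewrite /inner E eqxx.
Qed.

Lemma to_base_inj u v : u \in outside inner -> v \in outside inner -> to_base u = to_base v -> u = v.
Proof.
move=> /f_outside[s es] /f_outside[s' es']; rewrite /to_base es es' => /val_inj e; subst s'.
by apply: f_inj; rewrite es es'.
Qed.

Lemma to_base_X i : to_base (X i) = x' i. Proof. by rewrite /to_base f_X. Qed.
Lemma to_base_Y i : to_base (Y i) = y' i. Proof. by rewrite /to_base f_Y. Qed.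

Lemma base_K2_1_minor (i : 'I_t) : hasMinor G' (K2 1).
Proof. exact: K2_1_minor (adj_z'x' i) (adj_z'y' i) (x'_neq_y' i). Qed.

Lemma sum_K2_minor k m n : 0 < n -> (forall i : 'I_t, 1 < m) -> k = m * n ->
  hasMinor G (K2 k) -> hasMinor G' (K2 m) \/ exists i, hasMinor (Gs i) (K2 n).
Proof.
exact: (K2_minor_decomposition X_not_inner Y_not_inner inner_uniq inner_edge
  to_base_edge to_piece_edge to_base_z to_base_inj to_base_X to_base_Y
  to_piece_X to_piece_Y to_piece_z to_piece_inj adj_z'x' adj_z'y' adj_zx adj_zy
  z'_inj x_neq_y).
Qed.

End TwoSumDecomposition.

Theorem mainTheorem19 (C1 C2 : gclass) (m n : nat) :
  0 < m -> 0 < n ->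
  (forall G, C1 G -> ~ hasMinor G (K2 m)) ->
  (forall G, C2 G -> ~ hasMinor G (K2 n)) ->
  forall G, twoSumClass C1 C2 G -> ~ hasMinor G (K2 (m * n)).
Proof.
move=> m_gt0 n_gt0 noC1 noC2 G
  [G' [t [Gs [z' [x' [y' [z [x [y [f [G'C1 GsC2 sum [g fK gK] f_adj]]]]]]]]]]] minor.
have m_gt1 (i : 'I_t) : 1 < m.
  have [m1|] := eqVneq m 1; last by rewrite ltn_neqAle eq_sym m_gt0 andbT.
  by case: (noC1 _ G'C1); rewrite m1; apply: base_K2_1_minor sum i.
case: (sum_K2_minor fK gK sum f_adj n_gt0 m_gt1 erefl minor); first exact: noC1.
by case=> i; apply: noC2.
Qed.
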